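(* Let $F$ be a field with valuation $v:F\to\mathbb{R}\cup\{\infty\}$ whose value group is a proper dense subgroup of $\mathbb{R}$, $R=\{x\in F:v(x)\ge0\}$, $U=\{f\in R[[X]]:v_0(f)=0\}$ and $T=R[[X]]_U$. Then $R[[X]]$ is a pure $R$-submodule of $T$, and more generally for any index set $I$ the direct product $R[[X]]^I$ is a pure $R$-submodule of $T^I$.
   Context: $v_0\big(\sum_n s_nX^n\big)=\inf\{v(s_n):n\in\mathbb{N}\}$ (a valuation on $R[[X]]$). For a commutative ring $S$ and $S$-module $M$, a submodule $N\subseteq M$ is pure if for every $S$-module $L$ the natural map $N\otimes_S L\to M\otimes_S L$ is injective. *)

From HB Require Import structures.
From mathcomp Require Import all_boot all_order all_algebra.
From mathcomp Require Import lra.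
From mathcomp Require Import boolp classical_sets functions reals constructive_ereal ereal topology normedtype.
Set Implicit Arguments. Unset Strict Implicit. Unset Printing Implicit Defensive.
Import Order.TTheory GRing.Theory Num.Theory.
Local Open Scope ring_scope.

Record valuation (F : fieldType) (RR : realType) := Valuation {
  vfun :> F -> \bar RR;
  valuation_eq_inf : forall x, vfun x = +oo%E <-> x = 0;
  valuation_neq_ninf : forall x, vfun x != -oo%E;
  valuation_mul : forall x y, vfun (x * y) = (vfun x + vfun y)%E;
  valuation_add : forall x y, (Order.min (vfun x) (vfun y) <= vfun (x + y))%E
}.

Definition value_group (F : fieldType) (RR : realType) (v : valuation F RR)
  : set RR := [set r | exists2 x : F, x != 0 & v x = r%:E].

Section VRing.
Variables (F : fieldType) (RR : realType) (v : valuation F RR).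
Local Open Scope ereal_scope.

Definition vring_pred : {pred F} := fun x => 0 <= v x.

Let vfinE x : x != 0%R -> v x = (fine (v x))%:E.
Proof.
move=> x0; have := valuation_neq_ninf v x; case E: (v x) => [r| |] //= _.
by move/(valuation_eq_inf v): E => /eqP; rewrite (negbTE x0).
Qed.

Let v1 : v 1%R = 0.
Proof.
have := valuation_mul v 1%R 1%R; rewrite mulr1 (vfinE (oner_neq0 F)).
set r := fine _ => /eqP; rewrite -EFinD eqe => /eqP h.
by congr (_%:E); lra.
Qed.

Let vN1 : v (-1)%R = 0.
Proof.
have hn : (-1 : F)%R != 0%R by rewrite oppr_eq0 oner_neq0.
have := valuation_mul v (-1)%R (-1)%R; rewrite mulrNN mulr1 v1.
rewrite (vfinE hn); set r := fine _ => /eqP.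
rewrite -EFinD eqe => /eqP h; congr (_%:E); lra.
Qed.

Let vN x : v (- x)%R = v x.
Proof. by rewrite -mulN1r valuation_mul vN1 add0e. Qed.

Lemma vring_subring_closed : subring_closed vring_pred.
Proof.
split; first by rewrite unfold_in /vring_pred /= v1.
- move=> x y; rewrite !unfold_in /vring_pred /= => hx hy.
  apply: le_trans (valuation_add v x (- y)%R); rewrite vN.
  by rewrite le_min hx hy.
- move=> x y; rewrite !unfold_in /vring_pred /= => hx hy.
  by rewrite valuation_mul adde_ge0.
Qed.

HB.instance Definition _ := GRing.isSubringClosed.Build F vring_pred
  vring_subring_closed.

Record vring := VRing { vval :> F; vvalP : vval \in vring_pred }.
HB.instance Definition _ := [isSub for vval].
HB.instance Definition _ := [Choice of vring by <:].
HB.instance Definition _ := [SubChoice_isSubComNzRing of vring by <:].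
End VRing.

Section PowerSeries.
Variable R : comNzRingType.

Record pseries := PSeries { coefs : nat -> R }.
HB.instance Definition _ := [isNew for coefs].
HB.instance Definition _ := [Choice of pseries by <:].

Lemma pseriesP (a b : pseries) : coefs a =1 coefs b -> a = b.
Proof. by case: a b => a [b] /= /funext ->. Qed.

Definition ps_zero := PSeries (fun=> 0).
Definition ps_add a b := PSeries (fun n => coefs a n + coefs b n).
Definition ps_opp a := PSeries (fun n => - coefs a n).

Let ps_addA : associative ps_add.
Proof. by move=> a b c; apply: pseriesP => n /=; rewrite addrA. Qed.
Let ps_addC : commutative ps_add.
Proof. by move=> a b; apply: pseriesP => n /=; rewrite addrC. Qed.
Let ps_add0 : left_id ps_zero ps_add.
Proof. by move=> a; apply: pseriesP => n /=; rewrite add0r. Qed.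
Let ps_addN : left_inverse ps_zero ps_opp ps_add.
Proof. by move=> a; apply: pseriesP => n /=; rewrite addNr. Qed.

HB.instance Definition _ := GRing.isNmodule.Build pseries ps_addA ps_addC ps_add0.
HB.instance Definition _ := GRing.Nmodule_isZmodule.Build pseries ps_addN.

Definition ps_one := PSeries (fun n => (n == 0)%:R).
Definition ps_mul a b :=
  PSeries (fun n => \sum_(i < n.+1) coefs a i * coefs b (n - i)).

Definition ps_trunc n a : {poly R} := \poly_(i < n.+1) coefs a i.

Let coef_trunc n a i : (i <= n)%N -> (ps_trunc n a)`_i = coefs a i.
Proof. by move=> hi; rewrite coef_poly ltnS hi. Qed.

Let coefM_eq (p p' q q' : {poly R}) n :
  (forall i, (i <= n)%N -> p`_i = p'`_i) -> (forall i, (i <= n)%N -> q`_i = q'`_i) ->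
  (p * q)`_n = (p' * q')`_n.
Proof.
move=> hp hq; rewrite !coefM; apply: eq_bigr => i _.
by rewrite hp ?hq ?leq_subr // -ltnS.
Qed.

Let ps_mulE a b n : coefs (ps_mul a b) n = (ps_trunc n a * ps_trunc n b)`_n.
Proof.
rewrite coefM /=; apply: eq_bigr => i _.
by rewrite !coef_trunc ?leq_subr // -ltnS.
Qed.

Let trunc_mul n a b i : (i <= n)%N ->
  (ps_trunc n (ps_mul a b))`_i = (ps_trunc n a * ps_trunc n b)`_i.
Proof.
move=> hi; rewrite coef_trunc // ps_mulE; apply: coefM_eq => j hj;
by rewrite !coef_trunc // (leq_trans hj).
Qed.

Let ps_mulA : associative ps_mul.
Proof.
move=> a b c; apply: pseriesP => n; rewrite !ps_mulE.
rewrite (@coefM_eq _ (ps_trunc n a) _ (ps_trunc n b * ps_trunc n c)) //;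
  last by move=> i hi; rewrite trunc_mul.
rewrite mulrA; apply: coefM_eq => // i hi; by rewrite trunc_mul.
Qed.

Let ps_mulC : commutative ps_mul.
Proof. by move=> a b; apply: pseriesP => n; rewrite !ps_mulE mulrC. Qed.

Let trunc_one n : ps_trunc n ps_one = 1.
Proof.
apply/polyP => i; rewrite coef_poly coef1 /=.
by case: i => [|i]; rewrite //= if_same.
Qed.

Let ps_mul1 : left_id ps_one ps_mul.
Proof.
by move=> a; apply: pseriesP => n; rewrite ps_mulE trunc_one mul1r coef_trunc.
Qed.

Let trunc_add n a b : ps_trunc n (ps_add a b) = ps_trunc n a + ps_trunc n b.
Proof. by apply/polyP => i; rewrite coefD !coef_poly; case: ifP; rewrite ?addr0. Qed.

Let ps_mulDl : left_distributive ps_mul ps_add.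
Proof.
move=> a b c; apply: pseriesP => n; rewrite (ps_mulE (ps_add a b)) trunc_add mulrDl coefD.
by rewrite -[RHS]/(coefs (ps_mul a c) n + coefs (ps_mul b c) n) (ps_mulE a c) (ps_mulE b c).
Qed.

Let ps_one_neq0 : ps_one != 0.
Proof. by apply/eqP => /(congr1 (coefs^~ 0%N)) /= /eqP; rewrite oner_eq0. Qed.

HB.instance Definition _ := GRing.Zmodule_isComNzRing.Build pseries
  ps_mulA ps_mulC ps_mul1 ps_mulDl ps_one_neq0.

Definition ps_scale (r : R) a := PSeries (fun n => r * coefs a n).

Let ps_scaleA r s a : ps_scale r (ps_scale s a) = ps_scale (r * s) a.
Proof. by apply: pseriesP => n /=; rewrite mulrA. Qed.
Let ps_scale1 : left_id 1 ps_scale.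
Proof. by move=> a; apply: pseriesP => n /=; rewrite mul1r. Qed.
Let ps_scaleDr : right_distributive ps_scale +%R.
Proof. by move=> r a b; apply: pseriesP => n /=; rewrite mulrDr. Qed.
Let ps_scaleDl a : {morph ps_scale^~ a : r s / r + s}.
Proof. by move=> r s; apply: pseriesP => n /=; rewrite mulrDl. Qed.

HB.instance Definition _ := GRing.Zmodule_isLmodule.Build R pseries
  ps_scaleA ps_scale1 ps_scaleDr ps_scaleDl.

Let ps_scaleAl (r : R) (a b : pseries) : r *: (a * b) = (r *: a) * b.
Proof.
apply: pseriesP => n /=; rewrite mulr_sumr; apply: eq_bigr => i _.
by rewrite mulrA.
Qed.

HB.instance Definition _ := GRing.Lmodule_isLalgebra.Build R pseries ps_scaleAl.
HB.instance Definition _ := GRing.Lalgebra_isComAlgebra.Build R pseries.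

Lemma coefs_scale (r : R) a n : coefs (r *: a) n = r * coefs a n.
Proof. by []. Qed.
End PowerSeries.

(** N (x)_S L is the free abelian group on N * L modulo the subgroup generated
    by the bilinearity relations.  An element of the free abelian group is
    represented by a finite formal Z-combination  seq (int * (N * L)); its
    coefficient at a pair p is [fcoef s p]. *)
Section Tensor.
Variable S : comNzRingType.

Definition fcoef (T : eqType) (s : seq (int * T)) (p : T) : int :=
  \sum_(c <- s | c.2 == p) c.1.

Inductive tensor_gen (N L : lmodType S) : Type :=
| TGaddl of N & N & L
| TGaddr of N & L & L
| TGscale of S & N & L.

Definition tensor_gen_expand (N L : lmodType S) (g : tensor_gen N L)
  : seq (int * (N * L)) :=
  match g with
  | TGaddl n1 n2 l => [:: (1, (n1 + n2, l)); (-1, (n1, l)); (-1, (n2, l))]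
  | TGaddr n l1 l2 => [:: (1, (n, l1 + l2)); (-1, (n, l1)); (-1, (n, l2))]
  | TGscale r n l => [:: (1, (r *: n, l)); (-1, (n, r *: l))]
  end.

Definition in_tensor_relations (N L : lmodType S) (s : seq (int * (N * L))) :=
  exists gs : seq (int * tensor_gen N L),
    forall p, fcoef s p =
      fcoef (flatten [seq [seq (g.1 * c.1, c.2) | c <- tensor_gen_expand g.2]
                     | g <- gs]) p.

(** [tensor_zero s] : the element  \sum_i n_i (x) l_i  of N (x)_S L is zero,
    where s = [:: (n_1, l_1); ...; (n_k, l_k)] (every element of N (x) L has
    this form). *)
Definition tensor_zero (N L : lmodType S) (s : seq (N * L)) :=
  in_tensor_relations [seq (1%:Z, x) | x <- s].

Definition tensor_map_injective (N M : lmodType S) (f : N -> M) (L : lmodType S) :=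
  forall s : seq (N * L),
    tensor_zero [seq (f x.1, x.2) | x <- s] -> tensor_zero s.

Definition pure_embedding (N M : lmodType S) (f : N -> M) :=
  [/\ linear f, injective f & forall L : lmodType S, tensor_map_injective f L].
End Tensor.

(** * Localization (characterized by its standard elementwise property) *)
Definition is_localization (A B : comNzRingType) (U : set A)
    (iota : {rmorphism A -> B}) :=
  [/\ forall u, U u -> exists b, b * iota u = 1,
      forall b, exists a u, U u /\ b * iota u = iota a
    & forall a, iota a = 0 -> exists2 u, U u & u * a = 0].

Definition v0 (F : fieldType) (RR : realType) (v : valuation F RR)
    (f : pseries (vring v)) : \bar RR :=
  ereal_inf (range (fun n => v (vval (coefs f n)))).

Definition map_pow (I : Type) (A B : Type) (f : A -> B) (x : I -> A) : I -> B :=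
  fun i => f (x i).

From HB Require Import structures.
From mathcomp Require Import all_boot all_order all_algebra.
From mathcomp Require Import boolp classical_sets functions reals constructive_ereal ereal topology normedtype.
From mathcomp Require Import lra zify.
Import Order.TTheory GRing.Theory Num.Theory numFieldNormedType.Exports.
Set Implicit Arguments. Unset Strict Implicit. Unset Printing Implicit Defensive.
Local Open Scope ring_scope.

(** The argument rests on the classical fact that over a ring R whose
    divisibility relation is total (such as a valuation ring), an injective
    linear map f : N -> M is pure as soon as it is relatively divisible:
    r m in f(N) with r <> 0 forces m in f(N).  Indeed, relative divisibility
    lets one solve any finite linear system with right-hand sides in f(N) by
    Gaussian elimination on a pivot dividing its whole row; a vanishing
    tensor in M (x) L is witnessed by finitely many bilinearity relations, and
    solving the corresponding system produces a "partial retraction"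
    M -> N along which the witness descends to N (x) L.

    For R = {x | v x >= 0} and R[[X]] -> T, relative divisibility follows from
    the Gauss lemma: if v0 u = 0 and every coefficient of x u has valuation
    at least rho, so does every coefficient of x.  It is proved by tilting the
    coefficient valuations by a small slope so that their infimum is attained.
    Relative divisibility, injectivity and linearity pass to direct powers,
    which gives the statement for R[[X]]^I in T^I. *)

Section Valuation.
Variables (F : fieldType) (RR : realType) (v : valuation F RR).
Local Open Scope ereal_scope.

Lemma v0E : v 0%R = +oo.
Proof. exact/(valuation_eq_inf v). Qed.

Lemma v_fine x : x != 0%R -> v x = (fine (v x))%:E.
Proof.
move=> x0; have := valuation_neq_ninf v x; case E: (v x) => [r| |] //= _.
by move/(valuation_eq_inf v): E => /eqP; rewrite (negbTE x0).
Qed.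

Lemma v1 : v 1%R = 0.
Proof.
have := valuation_mul v 1%R 1%R; rewrite mulr1 (v_fine (oner_neq0 F)).
by set r := fine _ => /eqP; rewrite -EFinD eqe => /eqP h; congr (_%:E); lra.
Qed.

Lemma vN x : v (- x)%R = v x.
Proof.
have vN1 : v (-1)%R = 0.
  have := valuation_mul v (-1)%R (-1)%R; rewrite mulrNN mulr1 v1.
  rewrite (@v_fine (-1)%R); last by rewrite oppr_eq0 oner_neq0.
  set r := fine _ => /eqP.
  by rewrite -EFinD eqe => /eqP h; congr (_%:E); lra.
by rewrite -mulN1r valuation_mul vN1 add0e.
Qed.

Lemma v_add_strict a b : v a < v b -> v (a + b)%R = v a.
Proof.
move=> ab; apply/eqP; rewrite eq_le; apply/andP; split; last first.
  by have := valuation_add v a b; rewrite min_l // ltW.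
have := valuation_add v (a + b)%R (- b)%R; rewrite vN addrK => h.
by rewrite leNgt; apply/negP => hlt; move: h; rewrite leNgt lt_min hlt ab.
Qed.

Lemma vring_ge0 (a : vring v) : 0 <= v (val a).
Proof. exact: (vvalP a). Qed.

Lemma vring_dvd (a b : vring v) :
  val a != 0%R -> v (val a) <= v (val b) -> exists c, b = (c * a)%R.
Proof.
move=> a0 hab; have hc : 0 <= v (val b / val a)%R.
  have e : v (val b) = v (val b / val a)%R + v (val a).
    by rewrite -valuation_mul divfK.
  by move: hab; rewrite e -{1}[v (val a)]add0e leeD2rE // (v_fine a0).
by exists (@VRing F RR v _ hc); apply: val_inj; rewrite rmorphM /= divfK.
Qed.

Lemma vring_divisibility_total (a b : vring v) :
  (exists c, b = (c * a)%R) \/ (exists c, a = (c * b)%R).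
Proof.
have [a0|a0] := eqVneq (val a) 0%R.
  by right; exists 0%R; apply: val_inj; rewrite rmorphM /= a0 ?rmorph0 mul0r.
have [hab|hba] := leP (v (val a)) (v (val b)); first by left; exact: vring_dvd.
right; apply: vring_dvd (ltW hba).
by apply: contra_ltN hba => /eqP ->; rewrite v0E leey.
Qed.

Lemma vring_mulf_eq0 (a b : vring v) : (a * b == 0)%R = (a == 0%R) || (b == 0%R).
Proof. by rewrite -!(inj_eq val_inj) rmorphM /= ?rmorph0 mulf_eq0. Qed.
End Valuation.

Section FormalCombinations.
Variables (T1 T2 : eqType) (g : T1 -> T2).

Definition push (c : int * T1) : int * T2 := (c.1, g c.2).

Lemma fcoef_cons (T : eqType) (c : int * T) s p :
  fcoef (c :: s) p = (if c.2 == p then c.1 else 0) + fcoef s p.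
Proof. by rewrite /fcoef big_cons; case: ifP => _; rewrite ?add0r. Qed.

Lemma fcoef_push (D : seq T1) (s : seq (int * T1)) q : uniq D ->
  {subset map snd s <= D} ->
  fcoef (map push s) q = \sum_(p <- D | g p == q) fcoef s p.
Proof.
move=> uD; elim: s => [|c s IH] sD /=.
  by rewrite /fcoef big_nil big1 // => p _; rewrite big_nil.
have cD : c.2 \in D by apply: sD; rewrite inE eqxx.
rewrite fcoef_cons IH => [|x xs]; last by apply: sD; rewrite inE xs orbT.
under [RHS]eq_bigr do rewrite fcoef_cons.
rewrite big_split /= -big_mkcondr /=; congr (_ + _).
case: eqP => [<-|neq].
  rewrite (eq_bigl (pred1 c.2)); last first.
    move=> p /=; rewrite [p == _]eq_sym.
    by case: (eqVneq c.2 p) => [->|_]; rewrite ?eqxx ?andbF.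
  by rewrite -big_filter (filter_pred1_uniq uD cD) big_seq1.
rewrite big_pred0 // => p; case: (eqVneq c.2 p) => [<-|]; rewrite ?andbF ?andbT //.
exact/eqP.
Qed.

Lemma fcoef_push_eq (s1 s2 : seq (int * T1)) :
  fcoef s1 =1 fcoef s2 -> fcoef (map push s1) =1 fcoef (map push s2).
Proof.
move=> h q; set D := undup (map snd s1 ++ map snd s2).
have uD : uniq D := undup_uniq _.
have s1D : {subset map snd s1 <= D} by move=> x xs; rewrite mem_undup mem_cat xs.
have s2D : {subset map snd s2 <= D}.
  by move=> x xs; rewrite mem_undup mem_cat xs orbT.
by rewrite (fcoef_push q uD s1D) (fcoef_push q uD s2D); apply: eq_bigr => p _.
Qed.
End FormalCombinations.

Lemma In_flatten_map (A : Type) (B : eqType) (h : A -> seq B) (xs : seq A) x b :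
  List.In x xs -> b \in h x -> b \in flatten (map h xs).
Proof.
elim: xs => //= x' xs IH [<- hb|xin hb]; rewrite mem_cat ?hb //.
by rewrite IH ?orbT.
Qed.

(** A generator of the tensor relations says that a certain finite linear
    combination of elements of M vanishes; [gen_relation] lists it. *)
Section Generators.
Variables (R : comNzRingType) (N M L : lmodType R).

Definition gen_relation (g : tensor_gen M L) : seq (R * M) :=
  match g with
  | TGaddl m1 m2 _ => [:: (1, m1 + m2); (-1, m1); (-1, m2)]
  | TGaddr _ _ _ => [::]
  | TGscale r m _ => [:: (1, r *: m); (- r, m)]
  end.

Lemma gen_relation_sum g : \sum_(a <- gen_relation g) a.1 *: a.2 = 0.
Proof.
case: g => [m1 m2 l|m l1 l2|r m l]; rewrite /= ?big_nil // !big_cons big_nil.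
  by rewrite addr0 scale1r !scaleN1r -opprD subrr.
by rewrite addr0 scale1r scaleNr subrr.
Qed.

Definition gen_respects (p : M -> N) g :=
  \sum_(a <- gen_relation g) a.1 *: p a.2 = 0.

Definition gen_map (p : M -> N) (g : tensor_gen M L) : tensor_gen N L :=
  match g with
  | TGaddl m1 m2 l => TGaddl (p m1) (p m2) l
  | TGaddr m l1 l2 => TGaddr (p m) l1 l2
  | TGscale r m l => TGscale r (p m) l
  end.

Definition lift_pair (p : M -> N) (ml : M * L) : N * L := (p ml.1, ml.2).

Lemma expand_gen_map p g : gen_respects p g ->
  tensor_gen_expand (gen_map p g) = map (push (lift_pair p)) (tensor_gen_expand g).
Proof.
rewrite /gen_respects /push /lift_pair; case: g => [m1 m2 l|m l1 l2|r m l] //=;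
  rewrite !big_cons big_nil addr0 scale1r => h.
- suff -> : p (m1 + m2) = p m1 + p m2 by [].
  by apply/eqP; rewrite -subr_eq0 opprD -!scaleN1r h.
- suff -> : p (r *: m) = r *: p m by [].
  by apply/eqP; rewrite -subr_eq0 -scaleNr h.
Qed.

Lemma flatten_gen_map p (gs : seq (int * tensor_gen M L)) :
  (forall g, List.In g (map snd gs) -> gen_respects p g) ->
  flatten [seq [seq (g.1 * c.1, c.2) | c <- tensor_gen_expand g.2]
          | g <- map (fun g => (g.1, gen_map p g.2)) gs]
  = map (push (lift_pair p)) (flatten [seq [seq (g.1 * c.1, c.2)
          | c <- tensor_gen_expand g.2] | g <- gs]).
Proof.
elim: gs => //= g gs IH h; rewrite map_cat IH => [|g' hg']; last by apply: h; right.
rewrite expand_gen_map; last by apply: h; left.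
by rewrite -!map_comp.
Qed.
End Generators.

Definition rel_divisible (R : comNzRingType) (N M : lmodType R) (f : N -> M) :=
  forall (r : R) (m : M) (x : N), r != 0 -> r *: m = f x -> exists x', m = f x'.

Lemma pivot_decomp (R : comNzRingType) (V : lmodType R) (J : eqType) (s : seq J)
    j (a b : J -> R) (w : J -> V) : j \in s ->
  \sum_(k <- s) a k *: w k =
    a j *: (w j + \sum_(k <- rem j s) b k *: w k)
    + \sum_(k <- rem j s) (a k - a j * b k) *: w k.
Proof.
move=> js; rewrite (big_rem j js) scalerDr -addrA; congr (_ + _).
rewrite scaler_sumr -big_split /=; apply: eq_bigr => k _.
by rewrite scalerBl scalerA addrC subrK.
Qed.

Section RelativelyDivisible.
Variable R : comNzRingType.
Hypothesis divisibility_total :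
  forall a b : R, (exists c, b = c * a) \/ (exists c, a = c * b).

Lemma common_divisor_in (J : eqType) (a : J -> R) (s : seq J) : s != [::] ->
  exists2 j, j \in s & forall k, k \in s -> exists c, a k = c * a j.
Proof.
elim: s => [//|x s IH] _.
have [->|s0] := eqVneq s [::].
  exists x; first exact: mem_head.
  by move=> k; rewrite mem_seq1 => /eqP ->; exists 1; rewrite mul1r.
have [p ps hp] := IH s0.
have [[c hc]|[c hc]] := divisibility_total (a p) (a x).
- exists p; first by rewrite inE ps orbT.
  by move=> k; rewrite inE => /orP[/eqP ->|/hp //]; exists c.
- exists x; first exact: mem_head.
  move=> k; rewrite inE => /orP[/eqP ->|/hp [c' ->]]; first by exists 1; rewrite mul1r.
  by exists (c' * c); rewrite hc mulrA.
Qed.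

Variables (N M : lmodType R) (f : N -> M).
Hypotheses (f_linear : linear f) (f_inj : injective f) (f_rd : rel_divisible f).

Let f0 : f 0 = 0.
Proof.
have := f_linear 1 0 0; rewrite scale1r addr0 scale1r => h.
by apply: (addrI (f 0)); rewrite addr0 -h.
Qed.

Let fZ a x : f (a *: x) = a *: f x.
Proof. by have := f_linear a x 0; rewrite !addr0 f0 addr0. Qed.

Let fB x y : f (x - y) = f x - f y.
Proof.
have := f_linear (-1) y x; rewrite !scaleN1r => h.
by rewrite addrC h addrC.
Qed.

(** A linear system (rows indexed by an arbitrary type, finitely many unknowns
    indexed by s) whose right-hand sides lie in f(N) and which is solvable in M
    is solvable in N: Gaussian elimination on a pivot dividing its row. *)
Lemma solve_system (J : eqType) (s : seq J) : uniq s ->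
  forall (I : Type) (A : I -> J -> R) (c : I -> N) (y : J -> M),
  (forall i, \sum_(j <- s) A i j *: y j = f (c i)) ->
  exists z : J -> N, forall i, \sum_(j <- s) A i j *: z j = c i.
Proof.
have [n] := ubnP (size s); elim: n s => // n IH s hsize us I A c y hy.
have [[i0 [j0 j0s Aj0]]|hzero] :=
  pselect (exists i, exists2 j, j \in s & A i j != 0); last first.
  exists (fun=> 0) => i; rewrite big1 => [|j _]; last by rewrite scaler0.
  apply: f_inj; rewrite f0 -(hy i) big1_seq // => j /= js.
  have /eqP-> : A i j == 0 by apply/negPn/negP => nz; apply: hzero; exists i, j.
  by rewrite scale0r.
have [|j js hdiv] := common_divisor_in (A i0) (s := s).
  by apply: contraTneq j0s => ->.
have Aj : A i0 j != 0.
  by apply: contra Aj0 => /eqP Aj; have [c' ->] := hdiv j0 j0s; rewrite Aj mulr0.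
have /choice [b hb] : forall k, exists bk, k \in s -> A i0 k = bk * A i0 j.
  move=> k; have [ks|_] := boolP (k \in s); last by exists 0.
  by have [ck] := hdiv k ks; exists ck.
set s' := rem j s.
have js' : j \notin s' by rewrite mem_rem_uniqF.
(* the pivot row determines y j + \sum_k b k y k as an element of f(N) *)
have [t ht] : exists t, y j + \sum_(k <- s') b k *: y k = f t.
  apply: (f_rd (x := c i0) Aj); rewrite -(hy i0) (pivot_decomp _ b _ js).
  rewrite [X in _ = _ + X]big1_seq ?addr0 //.
  by move=> k /andP[_ /mem_rem ks]; rewrite hb // mulrC subrr scale0r.
(* eliminating the pivot column yields a system in the unknowns s' *)
pose A' i k := A i k - A i j * b k.
have hy' i : \sum_(k <- s') A' i k *: y k = f (c i - A i j *: t).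
  by rewrite fB fZ -ht -(hy i) (pivot_decomp _ b _ js) addrC addKr.
have [|z' hz'] := IH s' _ (rem_uniq j us) I A' _ y hy'.
  have : (0 < size s)%N by case: (s) js.
  by move: hsize; rewrite size_rem //; lia.
(* back substitution *)
pose z k := if k == j then t - \sum_(k' <- s') b k' *: z' k' else z' k.
have z_s' (G : J -> R) : \sum_(k <- s') G k *: z k = \sum_(k <- s') G k *: z' k.
  apply: eq_big_seq => k ks; rewrite /z ifN //.
  by apply: contraNneq js' => <-.
exists z => i; rewrite (pivot_decomp _ b _ js) !z_s' /z eqxx subrK.
by rewrite hz' addrC subrK.
Qed.

Lemma finite_retraction (I : Type) (E : seq M) (e : I -> seq (R * M)) (c : I -> N) :
  (forall i, {subset map snd (e i) <= E}) ->
  (forall i, \sum_(a <- e i) a.1 *: a.2 = f (c i)) ->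
  exists p : M -> N, forall i, \sum_(a <- e i) a.1 *: p a.2 = c i.
Proof.
move=> eE he; set D := undup E.
pose A i m := \sum_(a <- e i) a.1 * (a.2 == m)%:R.
have sumA (V : lmodType R) (w : M -> V) i :
    \sum_(m <- D) A i m *: w m = \sum_(a <- e i) a.1 *: w a.2.
  under eq_bigr do rewrite scaler_suml.
  rewrite exchange_big /=; apply: eq_big_seq => a ae.
  have aD : a.2 \in D by rewrite mem_undup (eE i) // map_f.
  rewrite (big_rem a.2 aD) /= eqxx mulr1 big1_seq ?addr0 // => m /=.
  rewrite mem_rem_uniq ?undup_uniq // => /andP[/negbTE ma _].
  by rewrite eq_sym ma mulr0 scale0r.
have [z hz] := @solve_system _ _ (undup_uniq E) I A c id
  (fun i => etrans (sumA _ _ i) (he i)).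
by exists z => i; rewrite -sumA.
Qed.

Lemma rd_tensor_injective (L : lmodType R) : tensor_map_injective f L.
Proof.
move=> s [gs hgs].
(* equations: p (f x) = x for the pairs (x, l) of s, and p respects every
   generator of the witness gs *)
pose I := ({x | x \in s} + {g | List.In g (map snd gs)})%type.
pose e (i : I) : seq (R * M) :=
  match i with inl x => [:: (1, f (sval x).1)] | inr g => gen_relation (sval g) end.
pose c (i : I) : N := match i with inl x => (sval x).1 | inr _ => 0 end.
set E := [seq f x.1 | x <- s] ++
         flatten (map (fun g => map snd (gen_relation g)) (map snd gs)).
have [p hp] : exists p : M -> N, forall i, \sum_(a <- e i) a.1 *: p a.2 = c i.
  apply: (finite_retraction (E := E)).
    case=> [[x xs]|[g gin]] m /=; rewrite mem_cat.
      by rewrite mem_seq1 => /eqP ->; rewrite map_f.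
    by move=> mg; rewrite (In_flatten_map gin mg) orbT.
  case=> [[x xs]|[g gin]] /=; first by rewrite big_seq1 scale1r.
  by rewrite gen_relation_sum f0.
(* along p, the witness for the image of s becomes a witness for s *)
have p_s x : x \in s -> p (f x.1) = x.1.
  by move=> xs; have := hp (inl (exist _ x xs)); rewrite /= big_seq1 scale1r.
have p_gs g : List.In g (map snd gs) -> gen_respects p g.
  by move=> gin; exact: (hp (inr (exist _ g gin))).
exists (map (fun g => (g.1, gen_map p g.2)) gs) => q.
rewrite flatten_gen_map //.
have -> : [seq (1%:Z, x) | x <- s] =
    map (push (lift_pair p)) [seq (1%:Z, x) | x <- [seq (f x.1, x.2) | x <- s]].
  rewrite -!map_comp; apply/eq_in_map => -[x l] xs /=.
  by rewrite /push /lift_pair /= (p_s (x, l)).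
exact: fcoef_push_eq hgs q.
Qed.

Lemma rd_pure_embedding : pure_embedding f.
Proof. by split=> //; exact: rd_tensor_injective. Qed.
End RelativelyDivisible.

Definition is_first_argmin (d : Order.disp_t) (T : orderType d) (w : nat -> T) n1 :=
  (forall k, (w n1 <= w k)%O) /\ (forall k, (k < n1)%N -> (w n1 < w k)%O).

Lemma first_argmin (d : Order.disp_t) (T : orderType d) (w : nat -> T) K n0 :
  (n0 < K)%N -> (forall k, (K <= k)%N -> (w n0 <= w k)%O) ->
  exists n1, is_first_argmin w n1.
Proof.
move=> n0K hK.
have [k0 hk0] : exists k0, forall k, (k <= K)%N -> (w k0 <= w k)%O.
  elim: (K) => [|K' [k0 hm]].
    by exists 0%N => k; rewrite leqn0 => /eqP ->.
  have [h|h] := leP (w k0) (w K'.+1).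
    by exists k0 => k; rewrite leq_eqVlt => /orP[/eqP ->|]; [|rewrite ltnS; exact: hm].
  exists K'.+1 => k; rewrite leq_eqVlt => /orP[/eqP ->//|].
  by rewrite ltnS => /hm; apply: le_trans; apply: ltW.
have glob k : (w k0 <= w k)%O.
  have [/hk0 //|/ltnW kK] := leqP k K.
  by apply: le_trans (hK _ kK); apply: hk0; exact: ltnW.
have [n1 /eqP h1 hmin] := ex_minnP (ex_intro (fun k => w k == w k0) k0 (eqxx _)).
exists n1; split=> [k|k kn]; first by rewrite h1.
rewrite lt_neqAle h1 glob andbT; apply: contraTneq kn => e.
by rewrite -leqNgt hmin // -e.
Qed.

Section Gauss.
Variables (F : fieldType) (RR : realType) (v : valuation F RR).
Local Notation R := (vring v).
Local Notation vc x k := (v (val (coefs x k))).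
Local Open Scope ereal_scope.

Lemma coefs_mulE (x u : pseries R) n :
  coefs (x * u)%R n = (\sum_(i < n.+1) coefs x i * coefs u (n - i))%R.
Proof. by []. Qed.

(** Tilting the coefficient valuations of x by a positive slope t makes them
    tend to +oo, so that their minimum is attained. *)
Definition tilted (t : RR) (x : pseries R) (k : nat) : \bar RR :=
  vc x k + (k%:R * t)%:E.

Lemma tilted_first_argmin (t : RR) (x : pseries R) k0 :
  (0 < t)%R -> val (coefs x k0) != 0%R ->
  exists2 n1, is_first_argmin (tilted t x) n1 & val (coefs x n1) != 0%R.
Proof.
move=> t0 xk0.
have lower k : (k%:R * t)%:E <= tilted t x k by rewrite leeDr // vring_ge0.
set c := (fine (vc x k0) + k0%:R * t)%R.
have ec : tilted t x k0 = c%:E by rewrite /tilted (v_fine v xk0).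
have c0 : (0 <= c)%R.
  by rewrite -lee_fin -ec (le_trans _ (lower k0)) // lee_fin mulr_ge0 // ltW.
pose K := Num.bound (c / t).
have hK : (c < K%:R * t)%R by rewrite -ltr_pdivrMr // archi_boundP // divr_ge0 // ltW.
have [|k kK|n1 hn1] := @first_argmin _ _ (tilted t x) K k0.
- rewrite -(ltr_nat RR) -(ltr_pM2r t0); apply: le_lt_trans hK.
  by rewrite -lee_fin -ec lower.
- rewrite ec (le_trans _ (lower k)) // lee_fin (le_trans (ltW hK)) //.
  by rewrite ler_pM2r // ler_nat.
- exists n1 => //; apply: contraTneq (hn1.1 k0); rewrite /tilted => ->.
  by rewrite v0E addye // (v_fine v xk0) -EFinD leye_eq.
Qed.

(** At the sum of the first minimizing indices of x and u, a single term of
    the Cauchy product has strictly the smallest valuation. *)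
Lemma coef_mul_first_argmins (t : RR) (x u : pseries R) n1 m1 :
  is_first_argmin (tilted t x) n1 -> is_first_argmin (tilted t u) m1 ->
  val (coefs x n1) != 0%R -> val (coefs u m1) != 0%R ->
  vc (x * u)%R (n1 + m1) = vc x n1 + vc u m1.
Proof.
move=> [xmin xfirst] [umin ufirst] x0 u0; set N := (n1 + m1)%N.
have fin_x : tilted t x n1 \is a fin_num by rewrite /tilted (v_fine v x0).
have fin_u : tilted t u m1 \is a fin_num by rewrite /tilted (v_fine v u0).
have tilt i : (i <= N)%N ->
    vc x i + vc u (N - i) + (N%:R * t)%:E = tilted t x i + tilted t u (N - i).
  by move=> iN; rewrite /tilted addeACA -EFinD -mulrDl -natrD subnKC.
have tilt1 : vc x n1 + vc u m1 + (N%:R * t)%:E = tilted t x n1 + tilted t u m1.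
  by have := tilt n1 (leq_addr m1 n1); rewrite /N addKn.
have n1N : (n1 < N.+1)%N by rewrite ltnS leq_addr.
have rest : vc x n1 + vc u m1 < v (\sum_(i < N.+1 | i != Ordinal n1N)
                                   val (coefs x i) * val (coefs u (N - i)))%R.
  apply: (big_ind (fun y => vc x n1 + vc u m1 < v y)).
  - by rewrite v0E (v_fine v x0) (v_fine v u0) -EFinD ltey.
  - move=> y1 y2 h1 h2; apply: lt_le_trans (valuation_add _ _ _).
    by rewrite lt_min h1 h2.
  move=> i ne; rewrite valuation_mul -(@lteD2rE _ (N%:R * t)%:E) //.
  rewrite tilt1 tilt; last by rewrite -ltnS.
  have [hi|hi|hi] := ltngtP i n1.
  - exact: lte_leD fin_u (xfirst _ hi) (umin _).
  - apply: lee_ltD fin_x (xmin _) (ufirst _ _).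
    by move: (ltn_ord i) hi; rewrite /N; lia.
  - by case/eqP: ne; apply: val_inj.
rewrite -valuation_mul in rest.
rewrite coefs_mulE rmorph_sum (bigD1 (Ordinal n1N)) //=.
have -> : (N - n1)%N = m1 by rewrite /N addKn.
by rewrite v_add_strict // valuation_mul.
Qed.

Lemma gauss_content (x u : pseries R) (rho : RR) : v0 u = 0 ->
  (forall k, rho%:E <= vc (x * u)%R k) -> forall n, rho%:E <= vc x n.
Proof.
move=> hu hxu n; rewrite leNgt; apply/negP => hlt.
have xn0 : val (coefs x n) != 0%R.
  by apply: contra_ltN hlt => /eqP ->; rewrite v0E leey.
set a := fine (vc x n); have ea : vc x n = a%:E := v_fine v xn0.
have arho : (a < rho)%R by rewrite -lte_fin -ea.
pose eps := ((rho - a) / 3)%R.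
have eps0 : (0 < eps)%R by rewrite divr_gt0 // subr_gt0.
have [m um] : exists m, vc u m < eps%:E.
  have : ereal_inf (range (fun k => vc u k)) < eps%:E by rewrite -/(v0 u) hu lte_fin.
  by move/ereal_inf_lt => [y [m _ <-] hy]; exists m.
have um0 : val (coefs u m) != 0%R.
  by apply: contra_ltN um => /eqP ->; rewrite v0E leey.
set b := fine (vc u m); have eb : vc u m = b%:E := v_fine v um0.
have beps : (b < eps)%R by rewrite -lte_fin -eb.
pose t := (eps / (n + m).+1%:R)%R.
have t0 : (0 < t)%R by rewrite divr_gt0.
have [n1 xn1 x1] := tilted_first_argmin t0 xn0.
have [m1 um1 u1] := tilted_first_argmin t0 um0.
have key : rho%:E <= tilted t x n + tilted t u m.
  apply: le_trans (hxu (n1 + m1)%N) _; rewrite (coef_mul_first_argmins xn1 um1) //.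
  apply: le_trans (leeD (xn1.1 n) (um1.1 m)).
  by rewrite leeD // leeDl // lee_fin mulr_ge0 // ltW.
have ht : (t * (n + m).+1%:R = eps)%R by rewrite divfK // pnatr_eq0.
have e3 : (3 * eps = rho - a)%R by rewrite mulrC divfK // pnatr_eq0.
move: key ht; rewrite /tilted ea eb -!EFinD lee_fin -addn1 !natrD !mulrDr mulr1.
rewrite ![(t * _)%R]mulrC; move: (n%:R * t)%R (m%:R * t)%R => p q; lra.
Qed.

Lemma ps_mul_eq0 (x u : pseries R) : v0 u = 0 -> (x * u = 0 -> x = 0)%R.
Proof.
move=> hu hxu; apply: pseriesP => n; apply: val_inj; apply/(valuation_eq_inf v).
have bound rho : rho%:E <= vc x n.
  by apply: (gauss_content hu) => k; rewrite hxu v0E leey.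
case E: (vc x n) (valuation_neq_ninf v (val (coefs x n))) => [r| |] // _.
by have := bound (r + 1)%R; rewrite E lee_fin gerDl ler10.
Qed.

Lemma gauss_divisibility (x u a : pseries R) (r : R) :
  r != 0%R -> v0 u = 0 -> (x * u)%R = r *: a -> exists x', x = r *: x'.
Proof.
move=> r0 hu hxu.
have r0F : val r != 0%R.
  by apply: contra r0 => /eqP h; apply/eqP; apply: val_inj; rewrite h.
have hr k : v (val r) <= vc x k.
  rewrite (v_fine v r0F); apply: (gauss_content hu) => j.
  rewrite hxu coefs_scale rmorphM valuation_mul -(v_fine v r0F).
  by rewrite leeDl // vring_ge0.
have /choice [c hc] : forall k, exists ck, coefs x k = (ck * r)%R.
  by move=> k; exact: vring_dvd r0F (hr k).
by exists (PSeries c); apply: pseriesP => k; rewrite coefs_scale hc mulrC.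
Qed.

Lemma ps_scale_eq0 (r : R) (a : pseries R) : (r != 0 -> r *: a = 0 -> a = 0)%R.
Proof.
move=> r0 ra; apply: pseriesP => n /=; apply/eqP.
have /eqP := congr1 (fun p : pseries R => coefs p n) ra.
by rewrite coefs_scale vring_mulf_eq0 (negbTE r0).
Qed.
End Gauss.

Section Localization.
Variables (F : fieldType) (RR : realType) (v : valuation F RR).
Local Notation R := (vring v).
Variables (T : comAlgType R) (iota : {lrmorphism pseries R -> T}).
Hypothesis hloc : is_localization [set f | v0 f = 0%E] iota.

(** R[[X]] -> T is injective since U consists of nonzerodivisors *)
Lemma localization_injective : injective iota.
Proof.
have [_ _ iota_ker] := hloc.
move=> a b eab; apply/eqP; rewrite -subr_eq0; apply/eqP.
have /iota_ker [u hu hua] : iota (a - b) = 0 by rewrite raddfB /= eab subrr.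
by apply: (ps_mul_eq0 hu); rewrite mulrC.
Qed.

(** T has no R-torsion: denominators are units and R[[X]] has none *)
Lemma localization_torsionfree (r : R) (d : T) : r != 0 -> r *: d = 0 -> d = 0.
Proof.
have [iota_unit iota_frac _] := hloc.
move=> r0 rd; have [a [w [hw hdw]]] := iota_frac d.
have a0 : a = 0.
  apply: (ps_scale_eq0 r0); apply: localization_injective.
  by rewrite linearZZ -hdw scalerAl rd mul0r rmorph0.
have [c hc] := iota_unit w hw.
by rewrite -[d]mulr1 -hc mulrCA hdw a0 rmorph0 mulr0.
Qed.

(** if r m = iota x, write m = iota a / iota u; then x u = r a, so r divides
    x by the Gauss lemma and m = iota (x / r) by torsion-freeness *)
Lemma localization_rel_divisible : rel_divisible iota.
Proof.
have [_ iota_frac _] := hloc.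
move=> r m x r0 rmx; have [a [u [hu hmu]]] := iota_frac m.
have [|x' ex] := gauss_divisibility (x := x) (a := a) r0 hu.
  by apply: localization_injective; rewrite rmorphM linearZZ -hmu scalerAl rmx.
exists x'; apply/eqP; rewrite -subr_eq0; apply/eqP.
by apply: (localization_torsionfree r0); rewrite scalerBr rmx ex linearZZ subrr.
Qed.
End Localization.

Section Powers.
Variables (R : comNzRingType) (N M : lmodType R) (f : N -> M) (I : Type).

Lemma map_pow_linear : linear f -> linear (map_pow (I:=I) f).
Proof. by move=> f_linear a x y; apply: funext => i; exact: f_linear. Qed.

Lemma map_pow_injective : injective f -> injective (map_pow (I:=I) f).
Proof.
move=> f_inj x y e; apply: funext => i; apply: f_inj.
exact: (congr1 (fun g => g i) e).
Qed.

Lemma map_pow_rel_divisible : rel_divisible f -> rel_divisible (map_pow (I:=I) f).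
Proof.
move=> f_rd r m x r0 e.
have /choice [y hy] : forall i, exists y, m i = f y.
  by move=> i; apply: (f_rd _ _ (x i) r0); exact: (congr1 (fun g => g i) e).
by exists y; apply: funext.
Qed.
End Powers.

Local Open Scope classical_set_scope.

Theorem proposition4p2 (F : fieldType) (RR : realType) (v : valuation F RR)
  (hdense : dense (value_group v)) (hproper : value_group v <> setT)
  (T : comAlgType (vring v)) (iota : {lrmorphism pseries (vring v) -> T})
  (hloc : is_localization [set f | v0 f = 0%E] iota) :
  pure_embedding (iota : pseries (vring v) -> T) /\
  forall I : Type, pure_embedding (map_pow (I:=I) (iota : pseries (vring v) -> T)).
Proof.
have divR := @vring_divisibility_total F RR v.
have iota_linear : linear (iota : pseries (vring v) -> T) := linearP iota.
have iota_inj := localization_injective hloc.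
have iota_rd := localization_rel_divisible hloc.
split; first exact: (rd_pure_embedding divR iota_linear iota_inj iota_rd).
move=> I; apply: (rd_pure_embedding divR).
- exact: map_pow_linear.
- exact: map_pow_injective.
- exact: map_pow_rel_divisible.
Qed.
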